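(* Let $R$ be a cubiculated region. The tiling space $\mathcal{T}_R$ is flip connected if and only if $I_{R_{tiling}}\subseteq I_{R_{flip}}$.
   Context: A cubiculated region $R$ is a homogeneous cubical complex of dimension $n$ embedded in $\mathbb{R}^N$ ($n\le N$), a union of elementary $n$-cubes. A domino is two elementary $n$-cubes of $R$ sharing an $(n-1)$-face; $\mathcal{D}_R$ is the set of dominoes. A domino tiling $T\subseteq\mathcal{D}_R$ covers every elementary cube exactly once; $\mathcal{T}_R$ is the set of tilings. $G_R$ is the graph with a vertex per elementary cube and an edge between cubes sharing an $(n-1)$-face; dominoes are edges of $G_R$. A move $M=(D_1,D_2)$ (with $D_1,D_2\subseteq\mathcal{D}_R$) takes a tiling $T_1$ to $T_1+M=(T_1\setminus D_1)\cup D_2$. A local flip is a move that replaces two adjacent parallel dominoes (sharing two $(n-1)$-faces) by the two adjacent parallel dominoes covering the same four cubes in the perpendicular direction; equivalently $D_1\cup D_2$ is a $4$-cycle of $G_R$ with $D_1,D_2$ its two pairs of opposite edges. $\mathcal{M}_{flip}$ is the set of all local flips. $\mathcal{T}_R$ is flip connected if for all $T_1,T_2\in\mathcal{T}_R$ there are $M_1,\dots,M_r\in\mathcal{M}_{flip}$ with $T_2=T_1+M_1+\dots+M_r$ and $T_1+M_1+\dots+M_s\in\mathcal{T}_R$ for all $1\le s\le r$. In the polynomial ring $\mathbb{K}[y_e: e\in E(G_R)]$ write $y^{E_0}=\prod_{e\in E_0}y_e$ for $E_0\subseteq E(G_R)$. The flip ideal is $I_{R_{flip}}=\langle y^{D_1}-y^{D_2}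 : (D_1,D_2)\in\mathcal{M}_{flip}\rangle$ and the tiling ideal is $I_{R_{tiling}}=\langle y^{T_1}-y^{T_2} : T_1,T_2\in\mathcal{T}_R\rangle$. *)

From HB Require Import structures.
From mathcomp Require Import all_boot all_order all_algebra.
From mathcomp Require Import mpoly.
Set Implicit Arguments. Unset Strict Implicit. Unset Printing Implicit Defensive.
Import Order.TTheory GRing.Theory Num.Theory.

(* An elementary cube is the product over coordinates i < N of
   [base i, base i + 1] if i \in dirs, and of the degenerate interval
   [base i, base i] otherwise.  Its dimension is #|dirs|. *)
Definition cube (N : nat) : Type := ({ffun 'I_N -> int} * {set 'I_N})%type.

Definition cube_lo N (c : cube N) (i : 'I_N) : int := c.1 i.
Definition cube_hi N (c : cube N) (i : 'I_N) : int :=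
  (c.1 i + ((i \in c.2) : nat)%:Z)%R.
Definition cube_dim N (c : cube N) : nat := #|c.2|.

(* The intersection of two elementary cubes is computed coordinatewise;
   it is nonempty iff every coordinate interval meets, and its dimension is
   the number of coordinates where the intersection is a unit interval. *)
Definition meet_nonempty N (c d : cube N) : bool :=
  [forall i, (Order.max (cube_lo c i) (cube_lo d i)
               <= Order.min (cube_hi c i) (cube_hi d i))%R].
Definition meet_dim N (c d : cube N) : nat :=
  #|[set i | (Order.max (cube_lo c i) (cube_lo d i)
               < Order.min (cube_hi c i) (cube_hi d i))%R]|.

Definition cubiculated (N n : nat) (R : seq (cube N)) : Prop :=
  forall c, c \in R -> cube_dim c = n.

Section Region.
Variables (N n : nat) (R : seq (cube N)).

Definition cubeR : finType := seq_sub R.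

Definition share_face (c d : cubeR) : bool :=
  [&& c != d, meet_nonempty (val c) (val d) & (meet_dim (val c) (val d)).+1 == n].

(* edges of G_R (= dominoes): unordered pairs {c,d} sharing an (n-1)-face *)
Definition is_edge (e : {set cubeR}) : bool :=
  [exists c, exists d, share_face c d && (e == [set c; d])].

Definition edgeR : finType := {e : {set cubeR} | is_edge e}.

Definition is_tiling (T : {set edgeR}) : Prop :=
  forall c : cubeR, #|[set e in T | c \in val e]| = 1%N.

Definition move : Type := ({set edgeR} * {set edgeR})%type.
Definition apply_move (T : {set edgeR}) (M : move) : {set edgeR} :=
  (T :\: M.1) :|: M.2.

Definition is_flip (M : move) : Prop :=
  exists a b c d : cubeR,
    [/\ uniq [:: a; b; c; d],
        [/\ share_face a b, share_face b c, share_face c d & share_face d a],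
        M.1 = [set e : edgeR | (val e == [set a; b]) || (val e == [set c; d])] &
        M.2 = [set e : edgeR | (val e == [set b; c]) || (val e == [set d; a])]].

Definition flip_connected : Prop :=
  forall T1 T2 : {set edgeR}, is_tiling T1 -> is_tiling T2 ->
    exists Ms : seq move,
      [/\ forall M, M \in Ms -> is_flip M,
          forall s, (1 <= s <= size Ms)%N -> is_tiling (foldl apply_move T1 (take s Ms))
        & foldl apply_move T1 Ms = T2].

Variable K : fieldType.
Definition polyR : Type := {mpoly K[#|edgeR|]}.

Definition yvar (e : edgeR) : polyR := 'X_(enum_rank e).
Definition ymon (E0 : {set edgeR}) : polyR := (\prod_(e in E0) yvar e)%R.

Definition ideal_gen (S : polyR -> Prop) (p : polyR) : Prop :=
  exists gs : seq (polyR * polyR),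
    (forall x, x \in gs -> S x.2) /\ p = (\sum_(x <- gs) x.1 * x.2)%R.

Definition flip_gens (p : polyR) : Prop :=
  exists M : move, is_flip M /\ p = (ymon M.1 - ymon M.2)%R.
Definition tiling_gens (p : polyR) : Prop :=
  exists T1 T2 : {set edgeR}, [/\ is_tiling T1, is_tiling T2 & p = (ymon T1 - ymon T2)%R].

Definition I_flip : polyR -> Prop := ideal_gen flip_gens.
Definition I_tiling : polyR -> Prop := ideal_gen tiling_gens.

End Region.

From HB Require Import structures.
From mathcomp Require Import all_boot all_order all_algebra.
From mathcomp Require Import mpoly.
From Stdlib Require Import ClassicalEpsilon.
Set Implicit Arguments. Unset Strict Implicit. Unset Printing Implicit Defensive.
Import GRing.Theory.

(* If the tilings are flip connected, y^T1 - y^T2 telescopes along a flip path: each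
   step multiplies a flip binomial by the monomial of the untouched dominoes, once one
   knows that a flip taking a tiling to a tiling either removes both of its dominoes
   or changes nothing.
   Conversely, let S be the set of tilings reachable from T1 and L the linear form
   summing the coefficients of a polynomial at the monomials y^T, T in S.  As S is
   closed under flips in both directions, m * y^D1 is the monomial of a tiling of S
   iff m * y^D2 is, so L kills every multiple of a flip binomial, hence I_flip.  Thus
   if y^T1 - y^T2 lies in I_flip then 0 = L(y^T1 - y^T2) = 1 - [T2 in S]. *)

Lemma disjoint_setDl (T : finType) (A B : {set T}) : [disjoint A :\: B & B].
Proof. by rewrite -setI_eq0 setDE -setIA [~: B :&: B]setIC setICr setI0. Qed.

Lemma setDUK (T : finType) (A B : {set T}) : B \subset A -> (A :\: B) :|: B = A.
Proof.
by move=> sBA; rewrite setDE setUIl [~: B :|: B]setUC setUCr setIT (setUidPl sBA).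
Qed.

Section PerfectMatchings.
Variables (V : finType) (P : pred {set V}).
Local Notation E := {s : {set V} | P s}.

Definition cover (D : {set E}) (v : V) : nat := #|[set e in D | v \in val e]|.

Definition perfect_matching (T : {set E}) : Prop := forall v, cover T v = 1.

Lemma coverU (D D' : {set E}) v :
  [disjoint D & D'] -> cover (D :|: D') v = cover D v + cover D' v.
Proof.
move=> dDD'; rewrite /cover -cardsUI !setIdE setIACA (disjoint_setI0 dDD').
by rewrite set0I cards0 addn0 setIUl.
Qed.

Lemma perfect_matching_uniq T v (e f : E) : perfect_matching T ->
  e \in T -> f \in T -> v \in val e -> v \in val f -> e = f.
Proof.
move=> pmT eT fT ve vf; have /eqP/cards1P[g Tg] := pmT v.
have : e \in [set e in T | v \in val e] by rewrite inE eT ve.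
have : f \in [set e in T | v \in val e] by rewrite inE fT vf.
by rewrite Tg !inE => /eqP-> /eqP->.
Qed.

Lemma perfect_matching_cover T v : perfect_matching T -> exists2 e, e \in T & v \in val e.
Proof.
move=> pmT; have /eqP/cards1P[g Tg] := pmT v.
have : g \in [set e in T | v \in val e] by rewrite Tg set11.
by rewrite inE => /andP[]; exists g.
Qed.

Hypothesis edge_neq0 : forall e : E, val e != set0.

Lemma perfect_matching_subset_eq (T T' : {set E}) :
  perfect_matching T -> perfect_matching T' -> T \subset T' -> T = T'.
Proof.
move=> pmT pmT' sTT'; apply/eqP; rewrite eqEsubset sTT'; apply/subsetP => e eT'.
have /set0Pn[v ve] := edge_neq0 e; have [f fT vf] := perfect_matching_cover v pmT.
by rewrite (perfect_matching_uniq pmT' eT' (subsetP sTT' _ fT) ve vf).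
Qed.

Lemma perfect_matching_exchange (T D1 D2 : {set E}) :
  perfect_matching T -> D1 \subset T -> (forall v, cover D1 v = cover D2 v) ->
  [disjoint T :\: D1 & D2] /\ perfect_matching ((T :\: D1) :|: D2).
Proof.
move=> pmT sD1T coverD12.
have disD2 : [disjoint T :\: D1 & D2].
  rewrite -setI_eq0; apply/set0Pn => -[e]; rewrite !inE => /andP[/andP[eD1 eT] eD2].
  have /set0Pn[v ve] := edge_neq0 e.
  have /card_gt0P[f] : 0 < cover D1 v.
    by rewrite coverD12; apply/card_gt0P; exists e; rewrite inE eD2.
  rewrite inE => /andP[fD1 vf].
  by rewrite (perfect_matching_uniq pmT eT (subsetP sD1T _ fD1) ve vf) fD1 in eD1.
split=> // v.
by rewrite coverU // -coverD12 -coverU ?disjoint_setDl // setDUK.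
Qed.

Definition pairing (a b c d : V) : {set E} :=
  [set e : E | (val e == [set a; b]) || (val e == [set c; d])].

Definition square (a b c d : V) : bool :=
  [&& uniq [:: a; b; c; d], P [set a; b], P [set b; c], P [set c; d] & P [set d; a]].

Lemma square_rot a b c d : square a b c d -> square b c d a.
Proof.
case/and5P=> Uabcd Pab Pbc Pcd Pda; apply/and5P; split=> //.
by rewrite -(rot_uniq 1) in Uabcd.
Qed.

Lemma pairingC a b c d : pairing c d a b = pairing a b c d.
Proof. by apply/setP => e; rewrite !inE orbC. Qed.

Lemma cover_sum D v : cover D v = \sum_(e in D) (v \in val e).
Proof. by rewrite /cover -sum1dep_card big_mkcondr. Qed.

Lemma cover_pairing a b c d v : square a b c d ->
  cover (pairing a b c d) v = (v \in [:: a; b; c; d]).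
Proof.
case/and5P=> Uabcd Pab _ Pcd _.
pose eab : E := Sub [set a; b] Pab; pose ecd : E := Sub [set c; d] Pcd.
have -> : pairing a b c d = [set eab; ecd].
  by apply/setP => e; rewrite !inE -!val_eqE.
move: Uabcd; rewrite /= !inE !negb_or => /and4P[/and3P[_ ac ad] /andP[bc bd] _ _].
rewrite cover_sum big_setU1 ?big_set1 /= ?inE; last first.
  apply: contra ac => /eqP/(congr1 val)/setP/(_ a).
  by rewrite /= !inE eqxx (negbTE ad) orbF => <-.
have [->|_] := eqVneq v a; first by rewrite (negbTE ac) (negbTE ad).
have [->|_] := eqVneq v b; first by rewrite (negbTE bc) (negbTE bd).
by case: (v == c); case: (v == d).
Qed.

Lemma cover_pairing_rot a b c d : square a b c d ->
  forall v, cover (pairing a b c d) v = cover (pairing b c d a) v.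
Proof.
by move=> sq v; rewrite !cover_pairing ?(square_rot sq) // -(mem_rot 1).
Qed.

(* The cube c is covered in T by some g; unless g is the cd-domino it survives the
   flip, so it is the bc-domino, which meets the ab-domino at b. *)
Lemma pairing_partner_in a b c d T (e f : E) : square a b c d ->
  perfect_matching T -> perfect_matching ((T :\: pairing a b c d) :|: pairing b c d a) ->
  val e = [set a; b] -> val f = [set c; d] -> e \in T -> f \in T.
Proof.
move=> /and5P[Uabcd _ Pbc _ _] pmT pmT' ve vf eT.
have c_ab : c \notin [set a; b].
  move: Uabcd; rewrite /= !inE !negb_or => /and4P[/and3P[_ ac _] /andP[bc _] _ _].
  by rewrite eq_sym ac eq_sym bc.
have [g gT cg] := perfect_matching_cover c pmT.
have [ebc ebc_bc] : {ebc : E | val ebc = [set b; c]} by exists (Sub _ Pbc).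
have ebcT' : ebc \in (T :\: pairing a b c d) :|: pairing b c d a.
  by rewrite !inE ebc_bc eqxx orbT.
have [|gD1] := boolP (g \in pairing a b c d).
  rewrite inE => /orP[/eqP gab | /eqP gcd]; first by rewrite gab in cg; rewrite cg in c_ab.
  by have -> : f = g by apply: val_inj; rewrite vf gcd.
have gT' : g \in (T :\: pairing a b c d) :|: pairing b c d a.
  by rewrite in_setU in_setD gD1 gT.
have gbc : g = ebc.
  by apply: (perfect_matching_uniq pmT' gT' ebcT' cg); rewrite ebc_bc !inE eqxx orbT.
have ebc_e : ebc = e.
  apply: (perfect_matching_uniq (v := b) pmT _ eT); rewrite ?ve ?ebc_bc ?inE ?eqxx ?orbT //.
  by rewrite -gbc.
by move: c_ab; rewrite -ve -ebc_e ebc_bc !inE eqxx orbT.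
Qed.

Lemma pairing_flip_cases a b c d T : square a b c d ->
  perfect_matching T -> perfect_matching ((T :\: pairing a b c d) :|: pairing b c d a) ->
  pairing a b c d \subset T \/ (T :\: pairing a b c d) :|: pairing b c d a = T.
Proof.
move=> sq pmT pmT'.
have sq' : square c d a b := square_rot (square_rot sq).
have pmT'' : perfect_matching ((T :\: pairing c d a b) :|: pairing d a b c).
  by rewrite (pairingC a b c d) (pairingC b c d a).
have all_in e f : e \in pairing a b c d -> f \in pairing a b c d -> e \in T -> f \in T.
  rewrite !inE => /orP[] /eqP ve /orP[] /eqP vf.
  - by have -> : f = e by apply: val_inj; rewrite vf ve.
  - exact: (pairing_partner_in sq pmT pmT' ve vf).
  - exact: (pairing_partner_in sq' pmT pmT'' ve vf).
  - by have -> : f = e by apply: val_inj; rewrite vf ve.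
have [/existsP[e /andP[eD1 eT]] | noneT] := boolP [exists e in pairing a b c d, e \in T].
  by left; apply/subsetP => f fD1; apply: all_in eD1 fD1 eT.
right; apply/esym/perfect_matching_subset_eq => //; apply/subsetP => e eT.
rewrite in_setU in_setD eT andbT; apply/orP; left.
by apply: contra noneT => eD1; apply/existsP; exists e; rewrite eD1.
Qed.

End PerfectMatchings.

Section SetMonomials.
Variable E : finType.

Definition mnm_of_set (D : {set E}) : 'X_{1..#|E|} :=
  [multinom ((enum_val i \in D) : nat) | i < #|E|].

Lemma mnm_of_set_rank (D : {set E}) e : mnm_of_set D (enum_rank e) = (e \in D).
Proof. by rewrite mnmE enum_rankK. Qed.

Lemma mnm_of_set_inj : injective mnm_of_set.
Proof.
move=> D D' /mnmP eqDD'; apply/setP => e; have := eqDD' (enum_rank e).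
by rewrite !mnm_of_set_rank; case: (e \in D); case: (e \in D').
Qed.

Lemma mnm_of_setU (A B : {set E}) :
  [disjoint A & B] -> (mnm_of_set A + mnm_of_set B)%MM = mnm_of_set (A :|: B).
Proof.
move=> dAB; apply/mnmP => i; rewrite mnmDE !mnmE inE.
by case eA : (enum_val i \in A); rewrite ?(disjointFr dAB eA).
Qed.

Lemma mnm_of_set_addK m (D T : {set E}) : (m + mnm_of_set D)%MM = mnm_of_set T ->
  D \subset T /\ m = mnm_of_set (T :\: D).
Proof.
move/mnmP => eqT.
have sDT : D \subset T.
  apply/subsetP => e eD; have := eqT (enum_rank e).
  by rewrite mnmDE !mnm_of_set_rank eD addn1; case: (e \in T).
split=> //; apply/mnmP => i; have := eqT i; rewrite mnmDE !mnmE inE.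
have [eD | _] := boolP (enum_val i \in D); last by rewrite addn0.
by rewrite (subsetP sDT _ eD) addn1 => -[].
Qed.

End SetMonomials.

Section ExchangeFunctional.
Local Open Scope ring_scope.
Variables (K : fieldType) (E : finType) (S : {set {set E}}).
Local Notation poly := {mpoly K[#|E|]}.

Definition coef_sum (p : poly) : K := \sum_(T in S) p@_(mnm_of_set T).

Lemma coef_sumB (p q : poly) : coef_sum (p - q) = coef_sum p - coef_sum q.
Proof. by rewrite /coef_sum -sumrB; apply: eq_bigr => T _; rewrite mcoeffB. Qed.

Lemma coef_sumZ c (p : poly) : coef_sum (c *: p) = c * coef_sum p.
Proof. by rewrite /coef_sum mulr_sumr; apply: eq_bigr => T _; rewrite mcoeffZ. Qed.

Lemma coef_sum_sum I (r : seq I) (F : I -> poly) :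
  coef_sum (\sum_(i <- r) F i) = \sum_(i <- r) coef_sum (F i).
Proof. by rewrite /coef_sum exchange_big; apply: eq_bigr => T _; rewrite raddf_sum. Qed.

Lemma coef_sumX m : coef_sum 'X_[m] = [exists T in S, mnm_of_set T == m]%:R.
Proof.
rewrite /coef_sum; under eq_bigr do rewrite mcoeffX.
have [[T /andP[TS /eqP <-]] | noT] := existsP.
  rewrite (bigD1 T) //= eqxx big1 ?addr0 // => T' /andP[_ T'T].
  by rewrite (inj_eq (@mnm_of_set_inj _)) eq_sym (negbTE T'T).
by rewrite big1 // => T TS; case: eqP => // eqT; case: noT; exists T; rewrite TS eqT eqxx.
Qed.

Definition exchange_closed (D1 D2 : {set E}) : Prop :=
  forall T, T \in S -> D1 \subset T -> [disjoint T :\: D1 & D2] /\ (T :\: D1) :|: D2 \in S.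

Lemma exchange_closed_mnm (D1 D2 : {set E}) m : exchange_closed D1 D2 ->
  [exists T in S, mnm_of_set T == (m + mnm_of_set D1)%MM] ->
  [exists T in S, mnm_of_set T == (m + mnm_of_set D2)%MM].
Proof.
move=> clD12 /existsP[T /andP[TS /eqP/esym/mnm_of_set_addK[sD1T ->]]].
have [dis T'S] := clD12 T TS sD1T.
by apply/existsP; exists ((T :\: D1) :|: D2); rewrite T'S -mnm_of_setU ?eqxx.
Qed.

Lemma coef_sum_binomial (D1 D2 : {set E}) (q : poly) :
  exchange_closed D1 D2 -> exchange_closed D2 D1 ->
  coef_sum (q * ('X_[mnm_of_set D1] - 'X_[mnm_of_set D2])) = 0.
Proof.
move=> clD12 clD21; rewrite mulrBr coef_sumB [q]mpolyE !mulr_suml !coef_sum_sum -sumrB.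
rewrite big1 // => m _; rewrite -!scalerAl -!mpolyXD !coef_sumZ !coef_sumX -mulrBr.
suff -> : [exists T in S, mnm_of_set T == (m + mnm_of_set D1)%MM] =
          [exists T in S, mnm_of_set T == (m + mnm_of_set D2)%MM] by rewrite subrr mulr0.
by apply/idP/idP; apply: exchange_closed_mnm.
Qed.

End ExchangeFunctional.

Section FlipIdeal.
Local Open Scope ring_scope.
Variables (N n : nat) (R : seq (cube N)) (K : fieldType).
Local Notation edge_pred := (@is_edge N n R).
Local Notation apply_moves := (foldl (@apply_move N n R)).

Lemma is_edge_neq0 (e : edgeR n R) : val e != set0.
Proof.
case: e => s /= /existsP[c /existsP[d /andP[_ /eqP ->]]].
by apply/set0Pn; exists c; rewrite !inE eqxx.
Qed.

Lemma share_face_edge (a b : cubeR R) : share_face n a b -> is_edge n [set a; b].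
Proof. by move=> ab; apply/existsP; exists a; apply/existsP; exists b; rewrite ab eqxx. Qed.

Lemma is_flipP (M : move n R) : is_flip M -> exists a b c d,
  square edge_pred a b c d /\ M = (pairing edge_pred a b c d, pairing edge_pred b c d a).
Proof.
case=> a [b [c [d [Uabcd [ab bc cd da] EM1 EM2]]]]; exists a, b, c, d; split.
  by apply/and5P; split => //; apply: share_face_edge.
by rewrite [M]surjective_pairing EM1 EM2.
Qed.

Lemma is_flip_rev (M : move n R) : is_flip M -> is_flip (M.2, M.1).
Proof.
case=> a [b [c [d [Uabcd [ab bc cd da] EM1 EM2]]]]; exists b, c, d, a; split.
- by rewrite (rot_uniq 1 [:: a; b; c; d]).
- by [].
- exact: EM2.
- by rewrite /= EM1; apply/setP => e; rewrite !inE orbC.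
Qed.

Lemma ymonU (A B : {set edgeR n R}) :
  [disjoint A & B] -> ymon K (A :|: B) = ymon K A * ymon K B.
Proof. by move=> dAB; rewrite /ymon -bigU //; apply: eq_bigl => e; rewrite !inE. Qed.

Lemma ymonE (D : {set edgeR n R}) : ymon K D = 'X_[mnm_of_set D].
Proof.
rewrite /ymon /yvar mpolyXE_id (bigID (fun i => enum_val i \in D)) /=.
rewrite [X in _ * X]big1 ?mulr1 => [|i]; last by rewrite mnmE => /negbTE ->.
rewrite (reindex enum_rank) /=; last first.
  by exists enum_val => i _; rewrite ?enum_valK ?enum_rankK.
by apply: eq_big => [e | e eD]; rewrite ?enum_rankK // mnm_of_set_rank eD.
Qed.

Lemma ideal_gen0 (S : polyR n R K -> Prop) : ideal_gen S 0.
Proof. by exists [::]; rewrite big_nil. Qed.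

Lemma ideal_genD (S : polyR n R K -> Prop) p q :
  ideal_gen S p -> ideal_gen S q -> ideal_gen S (p + q).
Proof.
move=> [gs [Sgs ->]] [gs' [Sgs' ->]]; exists (gs ++ gs'); split; last by rewrite big_cat.
by move=> x; rewrite mem_cat => /orP[/Sgs | /Sgs'].
Qed.

Lemma ideal_genMl (S : polyR n R K -> Prop) r p : ideal_gen S p -> ideal_gen S (r * p).
Proof.
move=> [gs [Sgs ->]]; exists [seq (r * x.1, x.2) | x <- gs]; split.
  move=> y /mapP[x xgs ->]; exact: (Sgs x xgs).
by rewrite big_map mulr_sumr; apply: eq_bigr => x _; rewrite mulrA.
Qed.

Lemma ideal_gen_mem (S : polyR n R K -> Prop) p : S p -> ideal_gen S p.
Proof.
by move=> Sp; exists [:: (1, p)]; rewrite big_seq1 mul1r; split=> // x /[!inE] /eqP ->.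
Qed.

Lemma ideal_gen_sub (S S' : polyR n R K -> Prop) p :
  (forall q, S q -> ideal_gen S' q) -> ideal_gen S p -> ideal_gen S' p.
Proof.
move=> SS' [gs [Sgs ->]]; elim: gs Sgs => [|x gs IH] Sgs.
  by rewrite big_nil; apply: ideal_gen0.
rewrite big_cons; apply: ideal_genD; first by apply/ideal_genMl/SS'/Sgs/mem_head.
by apply: IH => y ygs; apply: Sgs; rewrite inE ygs orbT.
Qed.

Definition flip_reachable (T1 T2 : {set edgeR n R}) : Prop :=
  exists Ms : seq (move n R),
    [/\ forall M, M \in Ms -> is_flip M,
        forall s, (1 <= s <= size Ms)%N -> is_tiling (apply_moves T1 (take s Ms))
      & apply_moves T1 Ms = T2].

Lemma flip_reachable_refl (T : {set edgeR n R}) : flip_reachable T T.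
Proof. by exists [::]; split=> // s /andP[/leq_trans le1s /le1s]. Qed.

Lemma flip_reachable_rcons (T1 T : {set edgeR n R}) (M : move n R) :
  flip_reachable T1 T -> is_flip M -> is_tiling (apply_move T M) ->
  flip_reachable T1 (apply_move T M).
Proof.
move=> [Ms [flipMs tilMs <-]] flipM tilM; exists (rcons Ms M).
rewrite foldl_rcons size_rcons; split=> // [M' | s /andP[s_gt0]].
  by rewrite mem_rcons inE => /predU1P[-> | /flipMs].
rewrite leq_eqVlt ltnS => /predU1P[-> | le_s_Ms].
  by rewrite take_oversize ?size_rcons // foldl_rcons.
by rewrite -cats1 takel_cat //; apply: tilMs; rewrite s_gt0.
Qed.

Lemma flip_reachable_ind (Q : {set edgeR n R} -> Prop) (T1 : {set edgeR n R}) :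
  Q T1 ->
  (forall T M, Q T -> is_flip M -> is_tiling (apply_move T M) -> Q (apply_move T M)) ->
  forall T, flip_reachable T1 T -> Q T.
Proof.
move=> QT1 QS T [Ms [+ + <-]]; elim/last_ind: Ms => [//|Ms M IH] flipMs tilMs.
rewrite foldl_rcons; apply: QS.
- apply: IH => [M' M'Ms | s /andP[s_gt0 le_s_Ms]].
    by apply: flipMs; rewrite mem_rcons inE M'Ms orbT.
  have := tilMs s; rewrite -cats1 takel_cat // size_cat addn1 s_gt0 (leqW le_s_Ms).
  by apply.
- by apply: flipMs; rewrite mem_rcons mem_head.
- have := tilMs (size Ms).+1.
  by rewrite take_oversize ?size_rcons // foldl_rcons ltnS !leqnn; apply.
Qed.

Lemma flip_step_binomial (T : {set edgeR n R}) (M : move n R) :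
  is_flip M -> is_tiling T -> is_tiling (apply_move T M) ->
  I_flip (ymon K T - ymon K (apply_move T M)).
Proof.
move=> flipM tilT; have [a [b [c [d [sq EM]]]]] := is_flipP flipM.
rewrite /apply_move EM /= => tilT'.
have [sD1T | ->] := pairing_flip_cases is_edge_neq0 sq tilT tilT'; last first.
  by rewrite subrr; apply: ideal_gen0.
have [disD2 _] := perfect_matching_exchange is_edge_neq0 tilT sD1T (cover_pairing_rot sq).
rewrite -{1}(setDUK sD1T) !ymonU ?disjoint_setDl // -mulrBr.
by apply: ideal_genMl; apply: ideal_gen_mem; exists M; split=> //; rewrite EM.
Qed.

Lemma reachable_binomial (T1 T : {set edgeR n R}) :
  is_tiling T1 -> flip_reachable T1 T -> I_flip (ymon K T1 - ymon K T).
Proof.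
move=> tilT1 reachT; have [] // : is_tiling T /\ I_flip (ymon K T1 - ymon K T).
move: T reachT; apply: flip_reachable_ind.
  by rewrite subrr; split=> //; apply: ideal_gen0.
move=> T' M [tilT' IT'] flipM tilM; split=> //.
rewrite -[ymon K T1](subrK (ymon K T')) -addrA; apply: ideal_genD => //.
exact: flip_step_binomial.
Qed.

Definition reachable_tilings (T1 : {set edgeR n R}) : {set {set edgeR n R}} :=
  [set T | excluded_middle_informative (is_tiling T /\ flip_reachable T1 T)].

Lemma reachable_tilingsP (T1 T : {set edgeR n R}) :
  reflect (is_tiling T /\ flip_reachable T1 T) (T \in reachable_tilings T1).
Proof. by rewrite inE; apply: sumboolP. Qed.

Lemma reachable_tilings_exchange (T1 : {set edgeR n R}) (M : move n R) :
  is_flip M -> exchange_closed (reachable_tilings T1) M.1 M.2.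
Proof.
move=> flipM T /reachable_tilingsP[tilT reachT] sD1T.
have [a [b [c [d [sq EM]]]]] := is_flipP flipM.
have coverM v : cover M.1 v = cover M.2 v by rewrite EM; apply: cover_pairing_rot.
have [disD2 tilT'] := perfect_matching_exchange is_edge_neq0 tilT sD1T coverM.
split=> //; apply/reachable_tilingsP; split=> //.
exact: flip_reachable_rcons.
Qed.

Lemma binomial_reachable (T1 T2 : {set edgeR n R}) :
  is_tiling T1 -> I_flip (ymon K T1 - ymon K T2) -> flip_reachable T1 T2.
Proof.
move=> tilT1 [gs [flipgs Egs]].
have : coef_sum (reachable_tilings T1) (ymon K T1 - ymon K T2) = 0.
  rewrite Egs coef_sum_sum big_seq big1 // => x /flipgs[M [flipM ->]].
  rewrite !ymonE; apply: coef_sum_binomial; first exact: reachable_tilings_exchange.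
  exact: (reachable_tilings_exchange (is_flip_rev flipM)).
have T1S : T1 \in reachable_tilings T1.
  by apply/reachable_tilingsP; split; last exact: flip_reachable_refl.
rewrite coef_sumB !ymonE !coef_sumX.
have -> : [exists T in reachable_tilings T1, mnm_of_set T == mnm_of_set T1].
  by apply/existsP; exists T1; rewrite T1S eqxx.
case: existsP => [[T /andP[/reachable_tilingsP[_ reachT] /eqP/mnm_of_set_inj <-]] // | _].
by rewrite subr0 => /eqP; rewrite oner_eq0.
Qed.

End FlipIdeal.

Theorem mainTheorem6 (K : fieldType) (N n : nat) (R : seq (cube N)) :
  cubiculated n R ->
  (flip_connected n R <-> (forall p : polyR n R K, I_tiling p -> I_flip p)).
Proof.
move=> _; split=> [conn p | sub T1 T2 tilT1 tilT2].
  apply: ideal_gen_sub => _ [T1 [T2 [tilT1 tilT2 ->]]].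
  exact: reachable_binomial tilT1 (conn T1 T2 tilT1 tilT2).
apply: (binomial_reachable (K := K)) => //.
by apply: sub; apply: ideal_gen_mem; exists T1, T2.
Qed.
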